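(* A quantum channel $\mathcal P$ on $S$ is activity breaking (i.e. $\mathcal P(\rho)\in\mathsf P(S)$ for every $\rho\in\mathsf{St}(S)$) if and only if there is a POVM $(P_j)_{j=1}^d$ (with $P_j\ge0$, $\sum_jP_j=I$) such that $\mathcal P(\rho)=\sum_{j=1}^d\mathrm{Tr}[P_j\rho]\,\tau_j$ for all $\rho$.
   Context: $S$ is a $d$-dimensional quantum system with non-degenerate Hamiltonian $H=\sum_i E_i|i\rangle\langle i|$, $E_1<\dots<E_d$. $\mathsf{St}(S)$ is the set of density matrices; $\mathsf P(S)$ is the set of passive states, i.e. states $\sum_i p_i|i\rangle\langle i|$ with $p_1\ge\dots\ge p_d$. For $j=1,\dots,d$, $\tau_j=\frac1j\sum_{i=1}^j|i\rangle\langle i|$. *)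

(* Complex scalars: an arbitrary numClosedFieldType C
   (e.g. C = complex numbers), with conjugation x^* and the usual partial
   order (0 <= z  iff  z is real and nonnegative). *)
From HB Require Import structures.
From mathcomp Require Import all_boot all_order all_algebra.
Set Implicit Arguments. Unset Strict Implicit. Unset Printing Implicit Defensive.
Import Order.TTheory GRing.Theory Num.Theory.
Local Open Scope ring_scope.

Section Quantum.
Variable C : numClosedFieldType.

Definition adjv n (v : 'cV[C]_n) : 'rV[C]_n := (map_mx Num.conj v)^T.

(* positive semidefinite:  <v|A|v> >= 0 for all v  (over C this forces
   Hermiticity) *)
Definition psdmx n (A : 'M[C]_n) : Prop :=
  forall v : 'cV[C]_n, 0 <= (adjv v *m A *m v) 0 0.

Definition density d (rho : 'M[C]_d) : Prop := psdmx rho /\ \tr rho = 1.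

(* Positivity of the n x n block matrix [B k l] (blocks of size d x d),
   i.e. psd of an element of M_n(M_d), written out blockwise:
   for all v = (v_k)_k, sum_{k,l} <v_k| B k l |v_l> >= 0. *)
Definition block_psd n d (B : 'I_n -> 'I_n -> 'M[C]_d) : Prop :=
  forall v : 'I_n -> 'cV[C]_d,
    0 <= \sum_(k < n) \sum_(l < n) (adjv (v k) *m B k l *m v l) 0 0.

(* complete positivity: id_n (x) P is positive for every n *)
Definition completely_positive d (P : 'M[C]_d -> 'M[C]_d) : Prop :=
  forall n (B : 'I_n -> 'I_n -> 'M[C]_d),
    block_psd B -> block_psd (fun k l => P (B k l)).

Definition trace_preserving d (P : 'M[C]_d -> 'M[C]_d) : Prop :=
  forall X, \tr (P X) = \tr X.

Definition quantum_channel d (P : 'M[C]_d -> 'M[C]_d) : Prop :=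
  linear P /\ completely_positive P /\ trace_preserving P.

(* Passive states P(S), relative to the energy eigenbasis |0>,...,|d-1>
   (the standard basis, ordered by increasing energy):
   states diagonal in that basis with nonincreasing populations. *)
Definition passive d (rho : 'M[C]_d) : Prop :=
  density rho /\
  exists p : 'I_d -> C,
    rho = diag_mx (\row_i p i) /\ forall i j : 'I_d, (i <= j)%N -> p j <= p i.

Definition activity_breaking d (P : 'M[C]_d -> 'M[C]_d) : Prop :=
  forall rho, density rho -> passive (P rho).

(* tau_j = (1/j) sum_{i <= j} |i><i| ; with 0-based index j : 'I_d this is
   (1/(j+1)) * projector onto the first j+1 basis vectors *)
Definition tau d (j : 'I_d) : 'M[C]_d :=
  (j.+1%:R)^-1 *: diag_mx (\row_(i < d) (if (i <= j)%N then 1 else 0)).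

Definition povm d (E : 'I_d -> 'M[C]_d) : Prop :=
  (forall j, psdmx (E j)) /\ \sum_(j < d) E j = 1%:M.

End Quantum.
Arguments tau {C d} j.

(* The passive state with populations p_0 >= ... >= p_{d-1} is the mixture
   sum_j c_j tau_j with c_j = (j+1) (p_j - p_{j+1}) >= 0 (where p_d = 0):
   the population of level i in that mixture is the telescoping sum
   sum_{j >= i} (p_j - p_{j+1}) = p_i (section PassiveMixtures).

   (->)  For each j the map X |-> (j+1) ((P X)_jj - (P X)_{j+1,j+1}) is a
   linear functional, represented through the trace pairing by a matrix E_j
   (TracePairing).  It is nonnegative on states by passivity of the outputs,
   hence E_j is positive semidefinite (StateFunctionals); the E_j sum to the
   identity because their functionals sum to tr (P X) = tr X.
   (<-)  Outputs are states since P is a channel; with c_j = tr(E_j rho),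
   which is >= 0 as a trace of a product of positive semidefinite matrices
   (proved by unitary diagonalization, section Forms), the output is a
   mixture of the tau_j with nonnegative weights, hence passive. *)

From HB Require Import structures.
From mathcomp Require Import all_boot all_order all_algebra ring.
From mathcomp Require Import sesquilinear spectral.
Import Order.TTheory GRing.Theory Num.Theory.
Local Open Scope ring_scope.
Set Implicit Arguments. Unset Strict Implicit. Unset Printing Implicit Defensive.

Section TracePairing.
Variable R : comPzRingType.

Definition dual_mx n (f : 'M[R]_n -> R) : 'M[R]_n := \matrix_(a, b) f (delta_mx b a).

Lemma dual_mxP n (f : {scalar 'M[R]_n}) X : \tr (dual_mx f *m X) = f X.
Proof.
rewrite /mxtrace; under eq_bigr do rewrite mxE.
rewrite exchange_big [in RHS](matrix_sum_delta X) linear_sum; apply: eq_bigr => b _.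
by rewrite linear_sum; apply: eq_bigr => a _; rewrite linearZ !mxE mulrC.
Qed.

Lemma trace_delta n (M : 'M[R]_n) a b : \tr (M *m delta_mx b a) = M a b.
Proof.
rewrite /mxtrace (bigD1 a) //= big1 ?addr0 => [|i i_neq_a].
  rewrite mxE (bigD1 b) //= big1 ?addr0 => [|k k_neq_b]; first by rewrite !mxE !eqxx mulr1.
  by rewrite !mxE (negbTE k_neq_b) mulr0.
by rewrite mxE big1 // => k _; rewrite !mxE eq_sym (negbTE i_neq_a) andbF mulr0.
Qed.

Lemma trace_pairing_inj n (M N : 'M[R]_n) :
  (forall X, \tr (M *m X) = \tr (N *m X)) -> M = N.
Proof. by move=> MN; apply/matrixP => a b; rewrite -!trace_delta MN. Qed.

End TracePairing.

Section Forms.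
Variable C : numClosedFieldType.
Local Open Scope sesquilinear_scope.

Definition form n (A : 'M[C]_n) (u w : 'cV[C]_n) : C := (adjv u *m A *m w) 0 0.

Lemma formE n (A : 'M[C]_n) u w :
  form A u w = \sum_i \sum_j (u i 0)^* * A i j * w j 0.
Proof.
rewrite /form /adjv mxE exchange_big /=; apply: eq_bigr => j _.
by rewrite mxE big_distrl /=; apply: eq_bigr => i _; rewrite !mxE.
Qed.

Lemma adjvD n (u w : 'cV[C]_n) : adjv (u + w) = adjv u + adjv w.
Proof. by rewrite /adjv map_mxD linearD. Qed.

Lemma adjvZ n c (u : 'cV[C]_n) : adjv (c *: u) = c^* *: adjv u.
Proof. by rewrite /adjv map_mxZ linearZ. Qed.

Lemma formDl n (A : 'M[C]_n) u u' w : form A (u + u') w = form A u w + form A u' w.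
Proof. by rewrite /form adjvD !mulmxDl mxE. Qed.

Lemma formDr n (A : 'M[C]_n) u w w' : form A u (w + w') = form A u w + form A u w'.
Proof. by rewrite /form mulmxDr mxE. Qed.

Lemma formZl n (A : 'M[C]_n) c u w : form A (c *: u) w = c^* * form A u w.
Proof. by rewrite /form adjvZ -!scalemxAl mxE. Qed.

Lemma formZr n (A : 'M[C]_n) c u w : form A u (c *: w) = c * form A u w.
Proof. by rewrite /form -scalemxAr mxE. Qed.

Lemma formBm n (A B : 'M[C]_n) u w : form (A - B) u w = form A u w - form B u w.
Proof. by rewrite /form mulmxBr mulmxBl !mxE. Qed.

Lemma form_delta n (A : 'M[C]_n) i j : form A (delta_mx i 0) (delta_mx j 0) = A i j.
Proof. by rewrite /form /adjv (map_delta_mx Num.conj) trmx_delta -rowE -colE !mxE. Qed.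

Lemma form_adj n (A : 'M[C]_n) u w : (form A u w)^* = form (A ^t*) w u.
Proof.
rewrite !formE rmorph_sum exchange_big; apply: eq_bigr => j _.
rewrite rmorph_sum; apply: eq_bigr => i _.
by rewrite !mxE !rmorphM /= conjCK; ring.
Qed.

(* Polarization: over C a matrix is determined by its quadratic form;
   test it on e_i + c e_j for c = 1 and c = 'i. *)
Lemma form_eq0 n (B : 'M[C]_n) : (forall v, form B v v = 0) -> B = 0.
Proof.
move=> B0; apply/matrixP => i j; rewrite mxE.
have expand c : form B (delta_mx i 0 + c *: delta_mx j 0)
                       (delta_mx i 0 + c *: delta_mx j 0) = c * B i j + c^* * B j i.
  rewrite !(formDl, formDr, formZl, formZr) !form_delta.
  by rewrite -[B i i]form_delta -[B j j]form_delta !B0; ring.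
have sym := expand 1; have skew := expand 'i.
rewrite B0 conjC1 !mul1r in sym; rewrite B0 conjCi in skew.
have : 'i * 2%:R * B i j = 0.
  have -> : 'i * 2%:R * B i j = 'i * (B i j + B j i) + ('i * B i j + - 'i * B j i) by ring.
  by rewrite -sym -skew mulr0 addr0.
by move/eqP; rewrite !mulf_eq0 (negbTE (neq0Ci C)) pnatr_eq0 => /eqP.
Qed.

Lemma psd_diag n (A : 'M[C]_n) i : psdmx A -> 0 <= A i i.
Proof. by move=> /(_ (delta_mx i 0)); rewrite -/(form _ _ _) form_delta. Qed.

(* A positive semidefinite matrix is Hermitian: its form is real on the
   diagonal, so A - A^t* has a vanishing quadratic form. *)
Lemma psd_hermitian n (A : 'M[C]_n) : psdmx A -> A ^t* = A.
Proof.
move=> A_psd; apply/eqP; rewrite -subr_eq0; apply/eqP/form_eq0 => v.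
rewrite formBm -form_adj; apply/eqP; rewrite subr_eq0; apply/eqP.
exact/CrealP/ger0_real/A_psd.
Qed.

(* Congruence preserves the sign of diagonal entries: (M X M^t* )_ii is the
   form of X at the i-th column of M^t*. *)
Lemma psd_congr_diag n (X M : 'M[C]_n) i : psdmx X -> 0 <= (M *m X *m M ^t*) i i.
Proof.
move=> X_psd; suff -> : (M *m X *m M ^t*) i i = form X (\col_k (M i k)^* ) (\col_k (M i k)^* ).
  exact: X_psd.
rewrite formE mxE exchange_big.
apply: eq_bigr => l _; rewrite !mxE big_distrl; apply: eq_bigr => k _.
by rewrite !mxE conjCK.
Qed.

(* tr(AB) >= 0 for positive semidefinite A and B: diagonalize A unitarily. *)
Lemma psd_trace_mul n (A B : 'M[C]_n) : psdmx A -> psdmx B -> 0 <= \tr (A *m B).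
Proof.
move=> A_psd B_psd.
have A_normal : A \is normalmx by apply/normalmxP; rewrite psd_hermitian.
set M := spectralmx A; set D := spectral_diag A.
have AE : A = M ^t* *m diag_mx D *m M.
  by rewrite -invmx_unitary ?spectral_unitarymx //; apply/orthomx_spectralP.
have M_unitary : M *m M ^t* = 1%:M by apply/unitarymxP/spectral_unitarymx.
have DE i : D 0 i = (M *m A *m M ^t* ) i i.
  by rewrite AE !mulmxA M_unitary mul1mx -!mulmxA M_unitary mulmx1 mxE eqxx mulr1n.
have -> : \tr (A *m B) = \tr (diag_mx D *m (M *m B *m M ^t* )).
  by rewrite AE -!mulmxA mxtrace_mulC !mulmxA.
rewrite /mxtrace; apply: sumr_ge0 => i _; rewrite mul_diag_mx mxE.
by rewrite mulr_ge0 // ?DE psd_congr_diag.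
Qed.

Lemma psdZ n c (A : 'M[C]_n) : 0 <= c -> psdmx A -> psdmx (c *: A).
Proof. by move=> c_ge0 A_psd v; rewrite /psdmx -scalemxAr -scalemxAl mxE mulr_ge0. Qed.

Lemma form_trace n (A : 'M[C]_n) v : form A v v = \tr (A *m (v *m adjv v)).
Proof. by rewrite mulmxA mxtrace_mulC trace_mx11 /form mulmxA. Qed.

(* v v^* is positive semidefinite: <w|v v^*|w> = |<v|w>|^2. *)
Lemma rank_one_psd n (v : 'cV[C]_n) : psdmx (v *m adjv v).
Proof.
move=> w; rewrite -/(form _ _ _) /form !mulmxA -mulmxA mxE big_ord1.
have adj1 u u' : (adjv u' *m u) 0 0 = form 1%:M u' u by rewrite /form mulmx1.
by rewrite !adj1 -[form 1%:M w v]conjCK form_adj trmx1 (map_mx1 Num.conj) mulrC mul_conjC_ge0.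
Qed.

Lemma trace_rank_one n (v : 'cV[C]_n) : \tr (v *m adjv v) = \sum_i v i 0 * (v i 0)^*.
Proof.
by rewrite mxtrace_mulC trace_mx11 mxE; apply: eq_bigr => i _; rewrite !mxE mulrC.
Qed.

End Forms.

Section StateFunctionals.
Variable C : numClosedFieldType.

(* A linear functional that is nonnegative on states is nonnegative on
   every rank-one matrix v v^*, after normalizing v v^* to a state. *)
Lemma scalar_rank_one_ge0 n (f : {scalar 'M[C]_n}) (v : 'cV[C]_n) :
  (forall rho, density rho -> 0 <= f rho) -> 0 <= f (v *m adjv v).
Proof.
move=> f_ge0; set R := v *m adjv v.
have tr_ge0 : 0 <= \tr R by rewrite trace_rank_one sumr_ge0 // => i _; apply: mul_conjC_ge0.
have [tr_eq0 | tr_neq0] := eqVneq (\tr R) 0.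
  suff v0 : v = 0 by rewrite /R v0 mul0mx linear0.
  apply/matrixP => i k; rewrite ord1 mxE; apply/eqP; rewrite -mul_conjC_eq0; apply/eqP.
  move: tr_eq0; rewrite trace_rank_one => /psumr_eq0P -> // l _; exact: mul_conjC_ge0.
have R_state : density ((\tr R)^-1 *: R).
  split; last by rewrite mxtraceZ mulVf.
  by apply: psdZ; [rewrite invr_ge0 | exact: rank_one_psd].
by rewrite -[R](scalerKV tr_neq0) linearZ /= mulr_ge0 // f_ge0.
Qed.

Lemma dual_mx_psd n (f : {scalar 'M[C]_n}) :
  (forall rho, density rho -> 0 <= f rho) -> psdmx (dual_mx f).
Proof.
by move=> f_ge0 v; rewrite -/(form _ _ _) form_trace dual_mxP scalar_rank_one_ge0.
Qed.

End StateFunctionals.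

Section PassiveMixtures.
Variables (C : numClosedFieldType) (d : nat).

Definition tau_weight (c : 'I_d -> C) (i : 'I_d) : C :=
  \sum_(j < d | (i <= j)%N) c j / j.+1%:R.

Lemma tau_mixtureE (c : 'I_d -> C) :
  \sum_(j < d) c j *: tau j = diag_mx (\row_i tau_weight c i).
Proof.
apply/matrixP => a b; rewrite summxE !mxE /tau_weight.
case: (eqVneq a b) => [<- | a_neq_b]; last first.
  by rewrite big1 // => j _; rewrite !mxE (negbTE a_neq_b) mulr0n !mulr0.
rewrite mulr1n [RHS]big_mkcond; apply: eq_bigr => j _; rewrite !mxE eqxx mulr1n.
by case: ifP; rewrite ?mulr0 ?mulr1.
Qed.

Lemma tau_weight_antitone (c : 'I_d -> C) (i i' : 'I_d) :
  (forall j, 0 <= c j) -> (i <= i')%N -> tau_weight c i' <= tau_weight c i.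
Proof.
move=> c_ge0 le_ii'; rewrite /tau_weight [leLHS]big_mkcond [leRHS]big_mkcond.
apply: ler_sum => j _; case: ifP => [le_i'j | _].
  by rewrite (leq_trans le_ii' le_i'j).
by case: ifP => // _; rewrite divr_ge0.
Qed.

Lemma trace_tau (j : 'I_d) : \tr (tau j : 'M[C]_d) = 1.
Proof.
rewrite mxtraceZ mxtrace_diag.
under eq_bigr do rewrite mxE.
rewrite -big_mkcond (_ : \sum_(i < d | (i <= j)%N) 1 = \sum_(i < j.+1) 1).
  by rewrite sumr_const card_ord mulVf ?pnatr_eq0.
by rewrite (big_ord_widen _ (fun=> 1) (ltn_ord j)).
Qed.

Lemma tau_weight_drops (b : nat -> C) (i : 'I_d) :
  tau_weight (fun j => j.+1%:R * (b j - b j.+1)) i = b i - b d.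
Proof.
rewrite /tau_weight; under eq_bigr do rewrite mulrC mulKf ?pnatr_eq0 //.
have -> : \sum_(j < d | (i <= j)%N) (b j - b j.+1) = \sum_(i <= j < d) (b j - b j.+1).
  by rewrite big_geq_mkord.
rewrite -opprB -(telescope_sumr _ (ltnW (ltn_ord i))) -sumrN.
by apply: eq_bigr => j _; rewrite opprB.
Qed.

End PassiveMixtures.

Section ActivityBreakingChannels.
Variables (C : numClosedFieldType) (d : nat) (P : 'M[C]_d -> 'M[C]_d).

(* Population of level k of Y, extended by 0 above the top level d - 1. *)
Definition population (Y : 'M[C]_d) (k : nat) : C :=
  if insub k is Some i then Y i i else 0.

Lemma population_ord (Y : 'M[C]_d) (i : 'I_d) : population Y i = Y i i.
Proof. by rewrite /population valK. Qed.

Lemma population_top (Y : 'M[C]_d) : population Y d = 0.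
Proof. by rewrite /population insubF ?ltnn. Qed.

(* The scaled population drop (j+1) (p_j - p_{j+1}) of the output P X: the
   coefficient of tau_j when P X is passive. *)
Definition drop (j : nat) (X : 'M[C]_d) : C :=
  j.+1%:R * (population (P X) j - population (P X) j.+1).

Definition effect (j : 'I_d) : 'M[C]_d := dual_mx (drop j).

Hypothesis P_linear : linear P.

Lemma drop_is_scalar j : scalar (drop j).
Proof.
have population_scalar k : scalar (population ^~ k).
  by move=> a X Y; rewrite /population; case: (insub k) => [i|]; rewrite ?mxE ?mulr0 ?addr0.
by move=> a X Y; rewrite /drop P_linear !population_scalar; ring.
Qed.

HB.instance Definition _ j :=
  GRing.isLinear.Build C 'M[C]_d C *%R (drop j) (drop_is_scalar j).

Lemma tau_weight_drop X (i : 'I_d) : tau_weight (fun j => drop j X) i = P X i i.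
Proof. by rewrite tau_weight_drops population_top subr0 population_ord. Qed.

(* The drops sum to tr (P X), hence the effects sum to the identity. *)
Lemma effect_sum : trace_preserving P -> \sum_(j < d) effect j = 1%:M.
Proof.
move=> P_tp; apply: trace_pairing_inj => X.
rewrite mul1mx mulmx_suml linear_sum /=; under eq_bigr do rewrite /effect dual_mxP.
have -> : \sum_(j < d) drop j X = \tr (\sum_(j < d) drop j X *: tau j).
  by rewrite linear_sum; apply: eq_bigr => j _; rewrite linearZ /= trace_tau mulr1.
rewrite tau_mixtureE mxtrace_diag -P_tp; apply: eq_bigr => i _.
by rewrite mxE tau_weight_drop.
Qed.

(* Passivity of P rho says exactly that all drops are nonnegative; the top
   drop is the last population, nonnegative since P rho is a state. *)
Lemma drop_ge0 rho (j : 'I_d) : passive (P rho) -> 0 <= drop j rho.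
Proof.
move=> [[Prho_psd _] [p [Prho_diag p_antitone]]].
have Prho_pop i : P rho i i = p i by rewrite Prho_diag !mxE eqxx mulr1n.
rewrite /drop mulr_ge0 ?ler0n // subr_ge0 population_ord /population.
case: insubP => [k _ k_val | _]; last exact: psd_diag.
by rewrite !Prho_pop p_antitone // k_val.
Qed.

Lemma effect_psd (j : 'I_d) : activity_breaking P -> psdmx (effect j).
Proof. by move=> P_ab; apply: dual_mx_psd => rho /P_ab; apply: drop_ge0. Qed.

Lemma effect_represents rho : activity_breaking P -> density rho ->
  P rho = \sum_(j < d) \tr (effect j *m rho) *: tau j.
Proof.
move=> P_ab rho_state; have [_ [p [Prho_diag _]]] := P_ab rho rho_state.
under eq_bigr do rewrite /effect dual_mxP.
rewrite tau_mixtureE; apply/matrixP => a b; rewrite [RHS]mxE mxE tau_weight_drop.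
by rewrite Prho_diag !mxE eqxx mulr1n.
Qed.

End ActivityBreakingChannels.

Section ChannelOutputs.
Variable C : numClosedFieldType.

Lemma block_psd1 n (M : 'M[C]_n) : block_psd (fun _ _ : 'I_1 => M) <-> psdmx M.
Proof.
split=> [M_psd v | M_psd v]; last by rewrite !big_ord1.
by have := M_psd (fun=> v); rewrite !big_ord1.
Qed.

(* A channel maps states to states: positivity is complete positivity at
   level 1, normalization is trace preservation. *)
Lemma channel_state d (P : 'M[C]_d -> 'M[C]_d) rho :
  quantum_channel P -> density rho -> density (P rho).
Proof.
move=> [_ [P_cp P_tp]] [rho_psd rho_tr]; split; last by rewrite P_tp.
by apply/block_psd1; apply: (P_cp 1 (fun _ _ => rho)); apply/block_psd1.
Qed.

End ChannelOutputs.

Unset Implicit Arguments.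

Theorem mainTheorem5 (C : numClosedFieldType) (d : nat) (P : 'M[C]_d -> 'M[C]_d) :
  (0 < d)%N -> quantum_channel P ->
  (activity_breaking P <->
   exists E : 'I_d -> 'M[C]_d,
     povm E /\
     forall rho : 'M[C]_d, density rho ->
       P rho = \sum_(j < d) \tr (E j *m rho) *: tau j).
Proof.
move=> _ P_channel; have [P_linear [_ P_tp]] := P_channel; split.
  move=> P_ab; exists (effect P); split; last by move=> rho; apply: effect_represents.
  by split; [move=> j; apply: effect_psd | apply: effect_sum].
move=> [E [[E_psd _] P_rep]] rho rho_state.
have coef_ge0 j : 0 <= \tr (E j *m rho) by apply: psd_trace_mul; case: rho_state.
split; first exact: channel_state.
exists (tau_weight (fun j => \tr (E j *m rho))); split; first by rewrite P_rep // tau_mixtureE.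
by move=> i i' le_ii'; apply: tau_weight_antitone.
Qed.
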